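(* Let $f\in\mathbb{Q}[x]$ be a convex univariate polynomial of degree $4$. If the minimum value of $f$ over $\mathbb{R}$ is rational, then the minimizer of $f$ is rational. *)

From HB Require Import structures.
From mathcomp Require Import all_boot all_order all_algebra.
From mathcomp Require Export reals.
Set Implicit Arguments. Unset Strict Implicit. Unset Printing Implicit Defensive.
Import Order.TTheory GRing.Theory Num.Theory.
Local Open Scope ring_scope.

Definition convex_on_R (R : realType) (g : R -> R) : Prop :=
  forall (x y t : R), 0 <= t -> t <= 1 ->
    g (t * x + (1 - t) * y) <= t * g x + (1 - t) * g y.

(* Let m be the minimum and t the minimizer. g = f - m is a rational quartic
   whose only real zero is t: two minimizers would make the convex f constant
   on a segment. Since f'(t) = 0, t is a multiple zero of g, hence the only
   real zero of D = gcd(g, g') in Q[x], and 1 <= deg D <= 3. If deg D <= 2, D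
   is linear, or quadratic with t as double zero -b/(2a); if deg D = 3, t is
   the zero of the linear rational factor g / D. *)

From HB Require Import structures.
From mathcomp Require Import all_boot all_order all_algebra.
From mathcomp Require Import reals.
From mathcomp Require Import normedtype derive.
From mathcomp Require Import polyorder ring zify.
Set Implicit Arguments.
Unset Strict Implicit.
Unset Printing Implicit Defensive.

Import Order.TTheory GRing.Theory Num.Theory.
Import numFieldNormedType.Exports.
Local Open Scope ring_scope.

Lemma horner_size2 (K : nzSemiRingType) (p : {poly K}) x :
  size p = 2%N -> p.[x] = p`_0 + p`_1 * x.
Proof.
by move=> sp; rewrite horner_coef sp big_ord_recl big_ord1 expr0 expr1 mulr1.
Qed.

Lemma horner_size3 (K : nzSemiRingType) (p : {poly K}) x :
  size p = 3%N -> p.[x] = p`_0 + p`_1 * x + p`_2 * x ^+ 2.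
Proof.
move=> sp; rewrite horner_coef sp !big_ord_recl big_ord0 /=.
by rewrite expr0 expr1 mulr1 addr0 addrA.
Qed.

Lemma coef_size_pred_neq0 (K : nzRingType) (p : {poly K}) n :
  size p = n.+1 -> p`_n != 0.
Proof.
move=> sp; have : lead_coef p != 0 by rewrite lead_coef_eq0 -size_poly_eq0 sp.
by rewrite lead_coefE sp.
Qed.

Lemma root_size2 (K : fieldType) (p : {poly K}) :
  size p = 2%N -> root p (- p`_0 / p`_1).
Proof.
move=> sp; have p1 := coef_size_pred_neq0 sp.
by rewrite /root horner_size2 // mulrCA mulfV // mulr1 subrr.
Qed.

Lemma horner_size3_reflect (K : fieldType) (p : {poly K}) x :
  size p = 3%N -> p.[- p`_1 / p`_2 - x] = p.[x].
Proof.
move=> sp; have p2 := coef_size_pred_neq0 sp.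
by rewrite !horner_size3 //; field.
Qed.

Section RationalPolynomials.

Variable R : numFieldType.

Local Notation "p ^r" := (map_poly (ratr : rat -> R) p) (at level 2, format "p ^r").

Lemma ratr_root (p : {poly rat}) r : root p r -> root p^r (ratr r).
Proof. by rewrite /root horner_map => /eqP ->; rewrite rmorph0. Qed.

Lemma ratr_root_size_gt1 (p : {poly rat}) t : p != 0 -> root p^r t -> (1 < size p)%N.
Proof.
move=> p0 /root_size_gt1; rewrite size_map_poly; apply.
by rewrite map_poly_eq0.
Qed.

Lemma ratr_unique_root_size_le3 (p : {poly rat}) (t : R) :
  p != 0 -> (size p <= 3)%N -> root p^r t -> (forall s, root p^r s -> s = t) ->
  exists r, t = ratr r.
Proof.
move=> p0 sp3 pt uniq_t.
have sp_gt1 := ratr_root_size_gt1 p0 pt.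
have [sp2 | sp_neq2] := eqVneq (size p) 2%N.
  by exists (- p`_0 / p`_1); apply/esym/uniq_t/ratr_root/root_size2.
have sp : size p = 3%N by lia.
(* Vieta: the other root -p_1/p_2 - t of p^r must be t itself. *)
exists (- p`_1 / p`_2 / 2%:R).
have : ratr (- p`_1 / p`_2) - t = t.
  have -> : ratr (- p`_1 / p`_2) = - p^r`_1 / p^r`_2.
    by rewrite !coef_map fmorph_div rmorphN.
  by apply: uniq_t; rewrite /root horner_size3_reflect ?size_map_poly.
move/eqP; rewrite subr_eq -mulr2n => /eqP c_2t.
have -> : t = ratr (- p`_1 / p`_2) / 2%:R by rewrite c_2t -[t *+ 2]mulr_natr mulfK ?pnatr_eq0.
by rewrite [RHS]fmorph_div rmorph_nat.
Qed.

Lemma ratr_unique_multiple_root (p : {poly rat}) (t : R) :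
  p != 0 -> (size p <= 5)%N -> root p^r t -> root (p^r)^`() t ->
  (forall s, root p^r s -> s = t) -> exists r, t = ratr r.
Proof.
move=> p0 sp5 pt p't uniq_t.
pose D := gcdp p p^`().
have DrE : D^r = gcdp p^r (p^r)^`() by rewrite gcdp_map deriv_map.
have Dt : root D^r t by rewrite DrE root_gcd pt.
have uniq_Dt s : root D^r s -> s = t by rewrite DrE root_gcd => /andP[/uniq_t].
have D0 : D != 0 by rewrite gcdp_eq0 negb_and p0.
have sp_gt1 := ratr_root_size_gt1 p0 pt.
have sD : (size D <= (size p).-1)%N.
  by rewrite -size_deriv leq_gcdpr // -size_poly_eq0 size_deriv -lt0n -ltnS prednK // ltnW.
have [sD3 | sD_gt3] := leqP (size D) 3.
  exact: ratr_unique_root_size_le3 D0 sD3 Dt uniq_Dt.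
pose E := p %/ D.
have pE : p = E * D by rewrite divpK // dvdp_gcdl.
have sE : size E = 2%N.
  have E0 : E != 0 by apply: contraNneq p0; rewrite pE => ->; rewrite mul0r.
  move: sp5 sD sD_gt3 (size_mul E0 D0); rewrite -pE.
  set e := size E; set d := size D; set n := size p; lia.
exists (- E`_0 / E`_1); apply/esym/uniq_t/ratr_root.
by rewrite pE rootM root_size2.
Qed.

End RationalPolynomials.

Lemma size_subC (R : nzRingType) (p : {poly R}) (c : R) :
  (1 < size p)%N -> size (p - c%:P) = size p.
Proof.
by move=> sp; rewrite size_polyDl // size_polyN (leq_ltn_trans (size_polyC_leq1 c)).
Qed.

Lemma convex_argmin_segment (R : realType) (g : R -> R) (t s l : R) :
  convex_on_R g -> (forall x, g t <= g x) -> g s = g t -> 0 <= l -> l <= 1 ->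
  g (l * s + (1 - l) * t) = g t.
Proof.
move=> cvx min_t gs l0 l1; apply/le_anti; rewrite min_t andbT.
by apply: (le_trans (cvx _ _ _ l0 l1)); rewrite gs -mulrDl addrCA subrr addr0 mul1r.
Qed.

Lemma convex_poly_argmin_unique (R : realType) (F : {poly R}) (t s : R) :
  (1 < size F)%N -> convex_on_R (horner F) ->
  (forall x, F.[t] <= F.[x]) -> F.[s] = F.[t] -> s = t.
Proof.
move=> sF cvx min_t Fs; apply/eqP; apply: contraT => s_neq_t.
pose n := size F; have n_gt0 : (0 < n)%N by apply: ltnW.
pose G := F - F.[t]%:P.
have G0 : G != 0 by rewrite -size_poly_eq0 size_subC // -lt0n.
have n0 : n%:R != 0 :> R by rewrite pnatr_eq0 -lt0n.
pose pt (i : nat) : R := (i%:R / n%:R) * s + (1 - i%:R / n%:R) * t.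
have G_pt i : (i < n)%N -> root G (pt i).
  move=> lt_in; rewrite /root /G hornerD hornerN hornerC subr_eq0.
  apply/eqP/(convex_argmin_segment cvx min_t Fs); first by rewrite divr_ge0.
  by rewrite ler_pdivrMr ?ltr0n // mul1r ler_nat ltnW.
have pt_inj : injective pt.
  move=> i j /eqP; rewrite -subr_eq0 => /eqP eq_ij.
  have : (i%:R / n%:R - j%:R / n%:R) * (s - t) = 0 :> R by rewrite -eq_ij /pt; ring.
  move/eqP; rewrite mulf_eq0 !subr_eq0 (negPf s_neq_t) orbF.
  by move=> /eqP /(mulIf (invr_neq0 n0)) /eqP; rewrite eqr_nat => /eqP.
suff : (n < n)%N by rewrite ltnn.
rewrite -[X in (X < _)%N](size_iota 0) -(size_map pt) -[X in (_ < X)%N](size_subC F.[t] sF).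
apply: max_poly_roots G0 _ _; last by rewrite map_inj_uniq ?iota_uniq.
by apply/allP => x /mapP [i]; rewrite mem_iota add0n => /andP [_ /G_pt G_x] ->.
Qed.

Lemma deriv_root_argmin (R : realFieldType) (F : {poly R}) (t : R) :
  (forall x, F.[t] <= F.[x]) -> root F^`() t.
Proof.
move=> min_t.
have min_deriv : is_derive t 1 (horner F) 0.
  apply: (@derive1_at_min _ _ (t - 1) (t + 1)).
  - by rewrite lerD2l; apply: (le_trans (lerN10 _)).
  - by move=> *; exact: derivable_horner.
  - by rewrite in_itv /= ltrDl ltr01 gtrDl ltrN10.
  - by move=> *; apply: min_t.
rewrite /root -(@derive_val _ _ _ _ _ _ _ (is_derive_poly F t)).
by rewrite (@derive_val _ _ _ _ _ _ _ min_deriv).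
Qed.

Theorem lemmaC3 (R : realType) (f : {poly rat}) :
  size f = 5%N ->
  convex_on_R (fun x : R => (map_poly ratr f).[x]) ->
  (exists q : rat,
      (forall x : R, ratr q <= (map_poly ratr f).[x]) /\
      (exists x0 : R, (map_poly ratr f).[x0] = ratr q)) ->
  forall xmin : R, (forall x : R, (map_poly ratr f).[xmin] <= (map_poly ratr f).[x]) ->
  exists r : rat, xmin = ratr r.
Proof.
move=> sf cvx [q [q_le [x0 Fx0]]] t min_t.
set F := map_poly ratr f in cvx q_le Fx0 min_t *.
have Ft : F.[t] = ratr q by apply/le_anti; rewrite q_le -Fx0 min_t.
pose g := f - q%:P.
have gE : map_poly ratr g = F - F.[t]%:P by rewrite rmorphB /= map_polyC Ft.
have sg : size g = 5%N by rewrite size_subC sf.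
have g_root s : root (map_poly ratr g) s = (F.[s] == F.[t]).
  by rewrite /root gE hornerD hornerN hornerC subr_eq0.
apply: (@ratr_unique_multiple_root _ g).
- by rewrite -size_poly_eq0 sg.
- by rewrite sg.
- by rewrite g_root.
- by rewrite gE derivB derivC subr0; apply: deriv_root_argmin.
- move=> s; rewrite g_root => /eqP; apply: convex_poly_argmin_unique min_t => //.
  by rewrite size_map_poly sf.
Qed.
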